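(* Let $P$ be a finite graded bowtie-free poset of rank $n$ with $\hat0$ and $\hat1$ equipped with a good $\mathcal{H}_n(0)$ action $U_1,\dots,U_{n-1}$. Let $\mathfrak m'$ be a maximal chain of $P$ and $i\in[n-1]$ with $U_i(\mathfrak m')\ne\mathfrak m'$. Then there is no finite sequence $i_1,\dots,i_r$ in $[n-1]$ with $U_{i_1}U_{i_2}\cdots U_{i_r}U_i(\mathfrak m')=\mathfrak m'$.
   Context: Bowtie-free: no distinct $a,b,c,d$ with $a$ and $b$ each covering both $c$ and $d$. $\mathcal{M}(P)$ is the set of maximal chains. A good $\mathcal{H}_n(0)$ action is a family of maps $U_1,\dots,U_{n-1}:\mathcal{M}(P)\to\mathcal{M}(P)$ with: (1) $U_i(\mathfrak m)$ agrees with $\mathfrak m$ except possibly at rank $i$; (2) $U_i^2=U_i$; (3) $U_iU_j=U_jU_i$ for $|i-j|\ge2$; (4) $U_iU_{i+1}U_i=U_{i+1}U_iU_{i+1}$; (5) $\omega F_P(x)=\mathrm{ch}(\chi_P)$, where $\chi_P$ is the character of the representation of the 0-Hecke algebra $\mathcal{H}_n(0)$ on $\mathbb{C}\mathcal{M}(P)$ with $T_i$ acting as $-U_i$; $F_P(x)=\sum x_1^{\mathrm{rk}(t_0,t_1)}\cdots x_k^{\mathrm{rk}(t_{k-1},t_k)}$ over multichains $\hat0=t_0\le\cdots\le t_{k-1}<t_k=\hat1$; $L_{S,n}=\sum_{1\le i_1\le\cdots\le i_n,\ i_j<i_{j+1}\ (j\in S)}x_{i_1}\cdots x_{i_n}$;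 $\omega(L_{S,n})=L_{[n-1]\setminus S,n}$; $\mathrm{ch}$ is linear with $\mathrm{ch}(\chi_S)=L_{S,n}$ where $\chi_S$ is the character of the one-dimensional representation $T_i\mapsto-1$ ($i\in S$), $T_i\mapsto 0$ ($i\notin S$). *)

From HB Require Import structures.
From mathcomp Require Import all_boot all_order all_algebra.
From mathcomp Require Import mpoly.
Set Implicit Arguments. Unset Strict Implicit. Unset Printing Implicit Defensive.
Import Order.Theory GRing.Theory.

Section PosetDefs.
Variables (d : Order.disp_t) (P : finTBPOrderType d).

Definition covers (x y : P) : bool :=
  ((x < y)%O && [forall z : P, ~~ ((x < z)%O && (z < y)%O)]).

Definition bowtie_free : Prop :=
  ~ exists a b c e : P,
      [/\ uniq [:: a; b; c; e],
          covers c a, covers e a, covers c b & covers e b].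

Definition rank_function (n : nat) (rk : P -> nat) : Prop :=
  [/\ rk \bot%O = 0%N, rk \top%O = n &
      forall x y : P, covers x y -> rk y = (rk x).+1].

Definition is_chain (C : {set P}) : bool :=
  [forall x in C, forall y in C, (x >=< y)%O].

Definition is_maxchain (C : {set P}) : bool :=
  is_chain C && [forall D : {set P}, (is_chain D && (C \subset D)) ==> (D == C)].

Definition maxchain := {C : {set P} | is_maxchain C}.

Definition Uword (U : nat -> maxchain -> maxchain) (w : seq nat) : maxchain -> maxchain :=
  foldr (fun i f => U i \o f) id w.

Definition in_range (n i : nat) : bool := (0 < i < n)%N.

(* [n-1] viewed inside 'I_n : subsets S of {1,...,n-1} *)
Definition validS (n : nat) (S : {set 'I_n}) : bool := [forall j in S, 0 < (j : nat)]%N.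

Definition memS (n : nat) (S : {set 'I_n}) (i : nat) : bool := [exists j in S, (j : nat) == i].

(* value of chi_P at T_{w_1} ... T_{w_r}: trace of (-U_{w_1}) o ... o (-U_{w_r})
   acting on C M(P), i.e. (-1)^r times the number of fixed points *)
Definition chiP (U : nat -> maxchain -> maxchain) (w : seq nat) : int :=
  ((-1) ^+ size w * (#|[set m : maxchain | Uword U w m == m]|)%:Z)%R.

Definition chiS (n : nat) (S : {set 'I_n}) (w : seq nat) : int :=
  \prod_(i <- w) (if memS S i then (-1)%R else 0%R).

(* the variable x_{j+1}, truncated to N variables (x_k = 0 for k > N) *)
Definition xvar (N j : nat) : {mpoly int[N]} :=
  if insub j is Some i then 'X_i else 0%R.

Definition is_multichain (k : nat) (t : seq P) : bool :=
  [&& nth \bot%O t 0 == \bot%O, nth \bot%O t k == \top%O,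
      [forall j : 'I_k, (nth \bot%O t j <= nth \bot%O t j.+1)%O] &
      (nth \bot%O t k.-1 < nth \bot%O t k)%O].

(* F_P(x_1,...,x_N,0,0,...): multichains with k > N contribute 0 *)
Definition FP (rk : P -> nat) (N : nat) : {mpoly int[N]} :=
  \sum_(1 <= k < N.+1)
    \sum_(t : (k.+1).-tuple P | is_multichain k t)
      \prod_(j < k) xvar N j ^+ (rk (nth \bot%O t j.+1) - rk (nth \bot%O t j)).

End PosetDefs.

(* L_{S,n}(x_1,...,x_N,0,0,...) ; a sequence i_1 <= ... <= i_n with values
   in [N] is an n-tuple of 'I_N (value j stands for x_{j+1}) *)
Definition Lfun (n N : nat) (S : {set 'I_n}) : {mpoly int[N]} :=
  \sum_(t : n.-tuple 'I_N |
          sorted leq (map val t) &&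
          [forall j in S, nth 0 (map val t) (j : nat).-1 < nth 0 (map val t) j]%N)
    \prod_(i <- t) 'X_i.

Definition complS (n : nat) (S : {set 'I_n}) : {set 'I_n} :=
  [set j : 'I_n | 0 < (j : nat)]%N :\: S.

(* By (5), the number of maximal chains fixed by U_{w_1} ... U_{w_r} depends
   only on the set J of letters of the word.  The braid and commutation
   relations give a word for J (a product of "staircases", the longest
   element of the parabolic subgroup) whose composite is absorbed by every
   U_a with a in J; its fixed points are therefore fixed by every U_a, a in J.
   Comparing cardinalities, the fixed points of any word with letter set J are
   exactly the common fixed points of the U_a, a in J.  Hence a chain fixed by
   U_{i_1} ... U_{i_r} U_i is fixed by U_i. *)

From HB Require Import structures.
From mathcomp Require Import all_boot all_order all_algebra.
From mathcomp Require Import mpoly.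
From mathcomp Require Import zify.
Import Order.Theory GRing.Theory.

Set Implicit Arguments.
Unset Strict Implicit.
Unset Printing Implicit Defensive.

Definition act_word {T : Type} (U : nat -> T -> T) (w : seq nat) : T -> T :=
  foldr (fun i f => U i \o f) id w.

Definition fixed_set {T : finType} (f : T -> T) : {set T} := [set x | f x == x].

Lemma in_fixed_set (T : finType) (f : T -> T) x : (x \in fixed_set f) = (f x == x).
Proof. by rewrite inE. Qed.

Lemma act_word_cat (T : Type) (U : nat -> T -> T) w1 w2 x :
  act_word U (w1 ++ w2) x = act_word U w1 (act_word U w2 x).
Proof. by elim: w1 => [|a w1 IH] //=; rewrite IH. Qed.

Lemma act_word_fixed (T : Type) (U : nat -> T -> T) w x :
  (forall a, a \in w -> U a x = x) -> act_word U w x = x.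
Proof.
elim: w => [|a w IH] //= fixx.
by rewrite IH ?fixx ?mem_head // => b bw; apply: fixx; rewrite in_cons bw orbT.
Qed.

Fixpoint run_to (p : pred nat) (t : nat) : seq nat :=
  if t is t'.+1 then (if p t then run_to p t' ++ [:: t] else [::]) else [::].

Fixpoint staircase (p : pred nat) (t : nat) : seq nat :=
  if t is t'.+1 then run_to p t ++ staircase p t' else [::].

Lemma mem_run_to (p : pred nat) t a :
  a \in run_to p t -> [&& 0 < a, a <= t & p a]%N.
Proof.
elim: t => [|t IH] //=; case pt: (p t.+1) => //.
rewrite mem_cat inE => /orP[/IH /and3P[-> /leqW -> ->] | /eqP ->] //.
by rewrite leqnn pt.
Qed.

Lemma run_to_gt (p : pred nat) k t :
  (k <= t)%N -> ~~ p k -> all (fun a => k < a)%N (run_to p t).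
Proof.
elim: t => [|t IH] /=; first by rewrite leqn0 => /eqP ->.
rewrite leq_eqVlt => /orP[/eqP <- /negbTE -> // | ltkt npk].
by case: (p t.+1); rewrite // all_cat IH //= ltkt.
Qed.

Lemma mem_staircase (p : pred nat) t a :
  (a \in staircase p t) = [&& 0 < a, a <= t & p a]%N.
Proof.
elim: t => [|t IH]; first by rewrite in_nil; case: a => [|[|]] //=; rewrite andbF.
rewrite -[staircase p t.+1]/(run_to p t.+1 ++ staircase p t) mem_cat IH; apply/idP/idP.
  by case/orP => [arun | /and3P[-> /leqW -> ->]]; first exact: mem_run_to arun.
case/and3P => a0; rewrite leq_eqVlt => /orP[/eqP -> pt | ltat pa].
  by rewrite /= pt mem_cat mem_head orbT.
by rewrite a0 -ltnS ltat pa orbT.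
Qed.

Section ZeroHeckeWords.

Variables (T : Type) (U : nat -> T -> T) (n : nat).
Hypothesis U_idem : forall i, in_range n i -> forall x, U i (U i x) = U i x.
Hypothesis U_far : forall i j, in_range n i -> in_range n j -> (j + 2 <= i)%N ->
  forall x, U i (U j x) = U j (U i x).
Hypothesis U_braid : forall i, in_range n i -> in_range n i.+1 ->
  forall x, U i (U i.+1 (U i x)) = U i.+1 (U i (U i.+1 x)).

Lemma act_word_comm_lo t w :
  in_range n t -> all (fun a => 0 < a <= t - 2)%N w ->
  forall x, U t (act_word U w x) = act_word U w (U t x).
Proof.
move=> int; elim: w => [|a w IH] //= /andP[a_lo w_lo] x.
by rewrite U_far ?IH //; move: int a_lo; rewrite /in_range; lia.
Qed.

Lemma act_word_comm_hi j w :
  in_range n j -> all (fun a => j + 2 <= a < n)%N w ->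
  forall x, U j (act_word U w x) = act_word U w (U j x).
Proof.
move=> inj; elim: w => [|a w IH] //= /andP[a_hi w_hi] x.
by rewrite -U_far ?IH //; move: inj a_hi; rewrite /in_range; lia.
Qed.

(* U_j U_l ... U_t = U_l ... U_t U_{j-1} for l < j <= t, and U_l U_l ... U_t
   = U_l ... U_t: move U_j right past U_l, ..., U_{j-2}, then braid. *)
Lemma run_to_shift (p : pred nat) t j :
  (0 < j <= t)%N -> (t < n)%N -> (forall k, j <= k <= t -> p k)%N ->
  forall x, U j (act_word U (run_to p t) x) =
    if (1 < j)%N && p j.-1 then act_word U (run_to p t) (U j.-1 x)
    else act_word U (run_to p t) x.
Proof.
elim: t j => [|t IH] j rngj ltn prun x; first by move: rngj; lia.
have pt : p t.+1 by apply: prun; move: rngj; lia.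
rewrite /= pt !act_word_cat /=.
have [ltjt | ejt] := ltnP j t.+1.
  rewrite IH; [ | lia | lia | by move=> k rngk; apply: prun; lia].
  by case: ifP => // /andP[j1 _]; rewrite -U_far //; rewrite /in_range; lia.
have -> : j = t.+1 by lia.
case: t {IH ejt rngj prun} pt ltn => [|t] pt ltn /=.
  by rewrite U_idem //; rewrite /in_range; lia.
case pt1: (p t.+1) => /=; last by rewrite U_idem //; rewrite /in_range; lia.
rewrite !act_word_cat /= act_word_comm_lo; last first.
- by apply/allP => a /mem_run_to; lia.
- by rewrite /in_range; lia.
by rewrite -U_braid //; rewrite /in_range; lia.
Qed.

Lemma staircase_absorb (p : pred nat) t j :
  (t < n)%N -> (0 < j <= t)%N -> p j ->
  forall x, U j (act_word U (staircase p t) x) = act_word U (staircase p t) x.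
Proof.
elim: t j => [|t IH] j ltn rngj pj x; first by move: rngj; lia.
rewrite -[staircase p t.+1]/(run_to p t.+1 ++ staircase p t) act_word_cat.
case pt: (p t.+1); last first.
  have nejt : j != t.+1 by apply: contraTneq pj => ->; rewrite pt.
  by rewrite /= pt /= IH //; lia.
case: (boolP (all p (iota j.+1 (t.+1 - j)))) => [prun | /allPn[k]].
  rewrite run_to_shift; [ | lia | lia | ]; last first.
    move=> k rngk; have [<- //|neqjk] := eqVneq j k.
    by apply: (allP prun); rewrite mem_iota; move: rngk neqjk; lia.
  by case: ifP => // /andP[j1 pj1]; rewrite IH //; lia.
rewrite mem_iota => rngk npk.
rewrite act_word_comm_hi; last first.
- apply/allP => a arun; have := allP (@run_to_gt p k t.+1 _ npk) a arun.
  by have := mem_run_to arun; move: rngk; lia.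
- by rewrite /in_range; move: rngj; lia.
by rewrite IH //; move: rngk; lia.
Qed.

End ZeroHeckeWords.

Lemma chiSE n (S : {set 'I_n}) w :
  chiS S w = if all (memS S) w then ((-1) ^+ size w)%R else 0%R.
Proof.
elim: w => [|a w IH]; first by rewrite /chiS big_nil.
rewrite /chiS big_cons -/(chiS S w) IH /=.
case: (memS S a) => /=; last by rewrite mul0r.
by case: (all _ _); rewrite ?mulr0 // exprS.
Qed.

Section FixedPointCount.

Variables (d : Order.disp_t) (P : finTBPOrderType d) (n : nat).
Variables (U : nat -> maxchain P -> maxchain P) (mult : {set 'I_n} -> int).
Hypothesis chiPE : forall w, all (in_range n) w ->
  chiP U w = (\sum_(S | validS S) mult S * chiS S w)%R.

Lemma card_fixed_setE w : all (in_range n) w ->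
  (#|fixed_set (Uword U w)|%:Z =
   \sum_(S | validS S) mult S * (all (memS S) w)%:Z)%R.
Proof.
move=> rngw; rewrite -(signrMK (size w) (Posz _)).
rewrite [X in (_ * X)%R](chiPE rngw) mulr_sumr; apply: eq_bigr => S _.
rewrite chiSE; case: (all _ _) => /=; last by rewrite !mulr0.
by rewrite [(_ * (-1) ^+ _)%R]mulrC signrMK mulr1.
Qed.

Lemma card_fixed_set_mem w1 w2 :
  all (in_range n) w1 -> all (in_range n) w2 -> w1 =i w2 ->
  #|fixed_set (Uword U w1)| = #|fixed_set (Uword U w2)|.
Proof.
move=> rng1 rng2 w12; have := card_fixed_setE rng1.
under eq_bigr => S _ do rewrite (eq_all_r w12).
(* Injecting through [absz] avoids [case], whose conversion check would
   evaluate both cardinalities. *)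
by rewrite -(card_fixed_setE rng2) => /(congr1 absz).
Qed.

End FixedPointCount.

Theorem mainTheorem9 (d : Order.disp_t) (P : finTBPOrderType d) (n : nat)
  (rk : P -> nat) (U : nat -> maxchain P -> maxchain P) :
  rank_function n rk ->
  bowtie_free P ->
  (* (1) U_i changes a maximal chain at most at rank i *)
  (forall i, in_range n i -> forall (m : maxchain P) (x : P),
       rk x != i -> (x \in val (U i m)) = (x \in val m)) ->
  (* (2) *)
  (forall i, in_range n i -> forall m, U i (U i m) = U i m) ->
  (* (3) *)
  (forall i j, in_range n i -> in_range n j -> (j + 2 <= i)%N ->
       forall m, U i (U j m) = U j (U i m)) ->
  (* (4) *)
  (forall i, in_range n i -> in_range n i.+1 ->
       forall m, U i (U i.+1 (U i m)) = U i.+1 (U i (U i.+1 m))) ->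
  (* (5) omega F_P = ch(chi_P) *)
  (exists (c mult : {set 'I_n} -> int),
     [/\ (* chi_P = sum_S mult_S chi_S as characters of H_n(0) *)
         (forall w : seq nat, all (in_range n) w ->
            chiP U w = (\sum_(S | validS S) mult S * chiS S w)%R),
         (* F_P = sum_S c_S L_S, in every number N of variables *)
         (forall N : nat, FP rk N = (\sum_(S | validS S) c S *: Lfun N S)%R) &
         (* omega F_P = sum_S c_S L_{[n-1]\S} equals ch(chi_P) = sum_S mult_S L_S *)
         (forall N : nat, (\sum_(S | validS S) c S *: Lfun N (complS S))%R
                          = (\sum_(S | validS S) mult S *: Lfun N S)%R)]) ->
  forall (m' : maxchain P) (i : nat), in_range n i -> U i m' != m' ->
  forall w : seq nat, all (in_range n) w -> Uword U w (U i m') != m'.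
Proof.
move=> _ _ _ U_idem U_far U_braid [_ [mult [chiPE _ _]]] m' i rngi.
move=> movei w rngw; apply: contra movei => /eqP fixm'.
set v := w ++ [:: i].
have rngv : all (in_range n) v by rewrite all_cat rngw /= rngi.
pose J := staircase (fun a => a \in v) n.-1.
have memJ : J =i v.
  move=> a; rewrite mem_staircase; apply/idP/idP => [/and3P[] // | av].
  by have := allP rngv a av; rewrite /in_range av andbT; lia.
have absorbJ a x : a \in v -> U a (Uword U J x) = Uword U J x.
  move=> av; have := allP rngv a av; rewrite /in_range => rnga.
  by apply: (staircase_absorb U_idem U_far U_braid) => //; lia.
have fixJ_fixv : fixed_set (Uword U J) \subset fixed_set (Uword U v).
  apply/subsetP => x; rewrite !in_fixed_set => /eqP fixx; apply/eqP.
  by apply: act_word_fixed => a av; rewrite -fixx absorbJ.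
have rngJ : all (in_range n) J by apply/allP => a; rewrite memJ; apply: allP.
have /(subset_cardP (card_fixed_set_mem chiPE rngJ rngv memJ)) fixJE := fixJ_fixv.
have : m' \in fixed_set (Uword U v).
  by rewrite in_fixed_set -[Uword U v]/(act_word U v) act_word_cat; apply/eqP.
rewrite -fixJE in_fixed_set => /eqP <-.
by rewrite absorbJ // mem_cat mem_head orbT.
Qed.
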